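(* Let $B\subseteq\mathbb{R}^n$ be a bounded set and let $V_0,V_1,\dots$ be nonempty finite subsets of $B$. Suppose there are $C^\star>0$ and $r_0>0$ such that for every $k\geq1$ and every $v_k\in V_k$ there exists $v_{k-1}\in V_{k-1}$ with $|v_{k-1}-v_k|<C^\star2^{-k}r_0$. Then $V_k$ converges in the Hausdorff metric to a compact set $V\subseteq\overline{B}$. *)

From HB Require Import structures.
From mathcomp Require Import all_boot all_order all_algebra.
From mathcomp Require Import all_classical all_reals all_analysis.
Set Implicit Arguments. Unset Strict Implicit. Unset Printing Implicit Defensive.
Import Order.TTheory GRing.Theory Num.Theory.
Import numFieldNormedType.Exports.
Local Open Scope classical_set_scope.
Local Open Scope ring_scope.

Definition eucl_dist (R : realType) (n : nat) (x y : 'rV[R]_n) : R :=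
  Num.sqrt (\sum_(i < n) (x ord0 i - y ord0 i) ^+ 2).

(* distance from a point to a set (extended real, +oo for the empty set) *)
Definition pt_set_dist (R : realType) (n : nat) (x : 'rV[R]_n) (A : set 'rV[R]_n)
  : \bar R := ereal_inf [set (eucl_dist x a)%:E | a in A].

Definition hausdorff_dist (R : realType) (n : nat) (A B : set 'rV[R]_n) : \bar R :=
  maxe (ereal_sup [set pt_set_dist a B | a in A])
       (ereal_sup [set pt_set_dist b A | b in B]).

From HB Require Import structures.
From mathcomp Require Import all_boot all_order all_algebra.
From mathcomp Require Import all_classical all_reals all_analysis.
From mathcomp Require Import ring lra zify.
Set Implicit Arguments. Unset Strict Implicit. Unset Printing Implicit Defensive.
Import Order.TTheory GRing.Theory Num.Theory.
Import numFieldNormedType.Exports.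
Local Open Scope classical_set_scope.
Local Open Scope ring_scope.

(* The limit is the Kuratowski upper limit W of the V k: the points every
   neighbourhood of which meets V j for infinitely many j.  It is closed and
   lies in the compact set closure B.  Following predecessors backwards, every
   point of V j (j >= k) is within Cstar r0 2^-k of V k, because the dyadic
   steps sum to at most that; hence every point of W is close to V k for k
   large.  Conversely, if V k kept points at distance >= e from W for
   infinitely many k, the finite intersection property in closure B would give
   a point of W at distance >= e from W.  Topological arguments use the max
   norm of 'rV, which is comparable to the Euclidean distance. *)

Section upper_limit.
Variable T : ptopologicalType.
Implicit Types (V : nat -> set T) (K O : set T).

Definition upper_limit V : set T :=
  \bigcap_(m in [set: nat]) closure (\bigcup_(j in [set j | (m <= j)%N]) V j).

Lemma closed_upper_limit V : closed (upper_limit V).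
Proof. by apply: closed_bigI => m _; exact: closed_closure. Qed.

Lemma upper_limit_sub_closure V K :
  (forall j, V j `<=` K) -> upper_limit V `<=` closure K.
Proof. by move=> VK x /(_ 0%N I); apply: closureS => y [j _ /VK]. Qed.

Lemma upper_limit_meets V w m U : upper_limit V w -> nbhs w U ->
  exists2 j, (m <= j)%N & V j `&` U !=set0.
Proof. by move=> /(_ m I) /[apply] -[x [[j mj Vjx] Ux]]; exists j => //; exists x. Qed.

Lemma upper_limit_subset_open V K O : compact K -> (forall j, V j `<=` K) ->
  open O -> upper_limit V `<=` O -> \forall j \near \oo, V j `<=` O.
Proof.
move=> cK VK oO limO; apply: contrapT => notev.
pose A m := closure (\bigcup_(j in [set j | (m <= j)%N]) V j) `&` ~` O.
have A_anti i m : (i <= m)%N -> A m `<=` A i.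
  move=> im x [clx Ox]; split=> //; apply: closureS clx => y [j /= mj Vjy].
  by exists j => //=; exact: leq_trans mj.
have KA m : K `&` A m !=set0.
  apply: contrapT => KA0; apply: notev; exists m => // j /= mj x Vjx.
  apply: contrapT => Ox; apply: KA0; exists x; split; first exact: VK Vjx.
  by split=> //; apply: subset_closure; exists j.
move: cK; rewrite compact_In0 => /(_ nat setT (fun m => K `&` A m)) [].
- exists A => // m _; apply: closedI; first exact: closed_closure.
  exact: open_closedC.
- move=> D _; set M := (\max_(i <- finmap.enum_fset D) i)%N.
  have [p [Kp AMp]] := KA M; exists p => i iD; split=> //.
  by apply: A_anti AMp; exact: (@leq_bigmax_seq _ _ xpredT id i iD).
- move=> p Ap; have [_ [_ Op]] := Ap 0%N I; apply/Op/limO => m _.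
  by have [_ []] := Ap m I.
Qed.

End upper_limit.

Section dyadic_chain.
Variables (R : realFieldType) (T : normedZmodType R) (V : nat -> set T) (c : R).
Hypothesis c_ge0 : 0 <= c.
Hypothesis V_pred : forall k x, V k.+1 x -> exists2 y, V k y & `|y - x| <= c * 2^-k.+1.

Lemma dyadic_chain_telescope k d x : V (k + d)%N x ->
  exists2 y, V k y & `|y - x| <= c * (2^-k - 2^-(k + d)).
Proof.
elim: d x => [|d IHd] x.
  by rewrite addn0 => Vx; exists x => //; rewrite !subrr normr0 mulr0.
rewrite addnS => /V_pred [x' /IHd [y Vy yx'] x'x]; exists y => //.
apply: le_trans (ler_distD x' _ _) _; apply: le_trans (lerD yx' x'x) _.
rewrite !exprS !invfM -/(2^-k) -/(2^-(k + d)) !mulrBr; lra.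
Qed.

Lemma dyadic_chain k j x : (k <= j)%N -> V j x -> exists2 y, V k y & `|y - x| <= c * 2^-k.
Proof.
move=> kj; rewrite -(subnKC kj) => /dyadic_chain_telescope [y Vy yx].
exists y => //; apply: le_trans yx _; rewrite ler_wpM2l // lerBlDr lerDl.
by rewrite invr_ge0 exprn_ge0.
Qed.

End dyadic_chain.

Lemma near_halfpow_le (R : realType) (c e : R) : 0 < e ->
  \forall k \near \oo, c * 2^-k <= e.
Proof.
move=> e0; have : geometric c (2^-1 : R) @ \oo --> 0.
  by apply: cvg_geometric; rewrite ger0_norm ?invr_ge0 // invf_lt1 //; lra.
move=> /cvgrPdist_le /(_ e e0); apply: filterS => k /=.
by rewrite sub0r normrN exprVn => /(le_trans (ler_norm _)).
Qed.

Lemma bounded_closure (R : realType) (W : normedModType R) (A : set W) :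
  bounded_set A -> bounded_set (closure A).
Proof.
move=> [M [Mreal AM]]; exists (M + 1); split; first exact: num_real.
move=> z Mz p clAp; have [y [Ay yp]] := clAp _ (nbhsx_ballx p 1 ltr01).
have /AM /(_ y Ay) /= y_le : M < z - 1 by rewrite ltrBrDr.
rewrite -ball_normE /= in yp; have := ler_normD y (p - y); rewrite addrC subrK.
by move=> /le_trans; apply; rewrite -[z](subrK 1) lerD // ltW.
Qed.

Section euclidean_distance.
Variables (R : realType) (n : nat).
Implicit Types (x y : 'rV[R]_n) (A W : set 'rV[R]_n).

Lemma eucl_dist_ge0 x y : 0 <= eucl_dist x y.
Proof. exact: sqrtr_ge0. Qed.

Lemma mx_norm_le_eucl_dist x y : `|x - y| <= eucl_dist x y.
Proof.
rewrite [leLHS]/Num.Def.normr /= mx_normrE; apply: bigmax_le; first exact: eucl_dist_ge0.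
move=> [i j] _ /=; rewrite (ord1 i) mxE -sqrtr_sqr ler_sqrt; last first.
  by apply: sumr_ge0 => k _; exact: sqr_ge0.
by rewrite (bigD1 j) //= !mxE lerDl; apply: sumr_ge0 => k _; exact: sqr_ge0.
Qed.

Lemma eucl_dist_le_mx_norm x y : eucl_dist x y <= n.+1%:R * `|x - y|.
Proof.
have entry_le i : `|x ord0 i - y ord0 i| <= `|x - y|.
  rewrite [leRHS]/Num.Def.normr /= mx_normrE.
  have := @le_bigmax _ R _ 0 (fun ij => `|(x - y) ij.1 ij.2|) (ord0, i).
  by rewrite /= !mxE.
rewrite /eucl_dist -(ger0_norm (_ : 0 <= n.+1%:R * `|x - y|)) ?mulr_ge0 //.
rewrite -sqrtr_sqr ler_sqrt ?sqr_ge0 //.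
apply: (@le_trans _ _ (\sum_(i < n) `|x - y| ^+ 2)).
  apply: ler_sum => i _; rewrite -real_normK ?num_real //.
  by rewrite lerXn2r ?nnegrE // normr_id.
rewrite sumr_const card_ord -[leLHS]mulr_natl exprMn; apply: ler_wpM2r; first exact: sqr_ge0.
by rewrite -natrX ler_nat; nia.
Qed.

Definition within_dist (e : R) A W := forall a, A a -> exists2 w, W w & eucl_dist a w <= e.

Lemma pt_set_dist_ge0 x A : (0 <= pt_set_dist x A)%E.
Proof. by apply: le_ereal_inf_tmp => _ [a _ <-]; rewrite lee_fin eucl_dist_ge0. Qed.

Lemma pt_set_dist_le x A e : (exists2 a, A a & eucl_dist x a <= e) ->
  (pt_set_dist x A <= e%:E)%E.
Proof.
move=> [a Aa xa]; apply: ge_ereal_inf; exists (eucl_dist x a)%:E => //.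
by exists a.
Qed.

Lemma hausdorff_dist_ge0 A W : A !=set0 -> (0 <= hausdorff_dist A W)%E.
Proof.
move=> [a Aa]; rewrite /hausdorff_dist le_max; apply/orP; left.
by apply: le_ereal_sup_tmp; exists (pt_set_dist a W); [exists a | exact: pt_set_dist_ge0].
Qed.

Lemma hausdorff_dist_le e A W : within_dist e A W -> within_dist e W A ->
  (hausdorff_dist A W <= e%:E)%E.
Proof.
move=> AW WA; rewrite /hausdorff_dist ge_max; apply/andP; split; apply: ge_ereal_sup.
- by move=> _ [a /AW ? <-]; exact: pt_set_dist_le.
- by move=> _ [w /WA ? <-]; exact: pt_set_dist_le.
Qed.

Lemma hausdorff_dist_cvg0 (A : nat -> set 'rV[R]_n) W : (forall k, A k !=set0) ->
  (forall e, 0 < e -> \forall k \near \oo, within_dist e (A k) W /\ within_dist e W (A k)) ->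
  (fun k => hausdorff_dist (A k) W) @ \oo --> 0%E.
Proof.
move=> A_ne close; apply/fine_cvgP; split.
  apply: filterS (close 1 ltr01) => k [AW WA].
  rewrite ge0_fin_numE ?hausdorff_dist_ge0 //.
  by rewrite (le_lt_trans (hausdorff_dist_le AW WA)) // ltry.
apply/cvgrPdist_le => e e0; apply: filterS (close e e0) => k [AW WA] /=.
move: (hausdorff_dist_ge0 W (A_ne k)) (hausdorff_dist_le AW WA).
by case: (hausdorff_dist _ _) => //= r; rewrite !lee_fin sub0r normrN => r0; rewrite ger0_norm.
Qed.

End euclidean_distance.

Section upper_limit_in_Rn.
Variables (R : realType) (n : nat) (V : nat -> set 'rV[R]_n).

Lemma eventually_within_upper_limit (K : set 'rV[R]_n) e : compact K ->
  (forall j, V j `<=` K) -> 0 < e ->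
  \forall k \near \oo, within_dist e (V k) (upper_limit V).
Proof.
move=> cK VK e0; set r := e / n.+1%:R.
have r0 : 0 < r by rewrite divr_gt0.
pose O := \bigcup_(w in upper_limit V) ball w r.
have oO : open O by apply: bigcup_open => w _; exact: ball_open.
have limO : upper_limit V `<=` O by move=> w Ww; exists w => //; exact: ballxx.
apply: filterS (upper_limit_subset_open cK VK oO limO) => k VkO a /VkO [w Ww wa].
exists w => //; apply: le_trans (eucl_dist_le_mx_norm a w) _.
rewrite -ball_normE /= distrC in wa.
by rewrite mulrC -ler_pdivlMr // ltW.
Qed.

Lemma upper_limit_eventually_within c e : 0 <= c ->
  (forall k x, V k.+1 x -> exists2 y, V k y & `|y - x| <= c * 2^-k.+1) -> 0 < e ->
  \forall k \near \oo, within_dist e (upper_limit V) (V k).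
Proof.
move=> c0 V_pred e0; set r := e / (2 * n.+1%:R).
have r0 : 0 < r by rewrite divr_gt0 // mulr_gt0.
apply: filterS (near_halfpow_le c r0) => k ck w Ww.
have [j kj [x [Vjx wx]]] := upper_limit_meets k Ww (nbhsx_ballx w r r0).
have [y Vky yx] := dyadic_chain c0 V_pred kj Vjx.
exists y => //; apply: le_trans (eucl_dist_le_mx_norm w y) _.
have wy : `|w - y| <= r + r.
  apply: le_trans (ler_distD x w y) _; rewrite -ball_normE /= in wx.
  by apply: lerD; [exact: ltW | rewrite distrC; exact: le_trans yx ck].
have -> : e = n.+1%:R * (r + r) by rewrite /r; field.
by rewrite ler_wpM2l.
Qed.

End upper_limit_in_Rn.

Theorem lemma8p2 (R : realType) (n : nat) (B : set 'rV[R]_n)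
  (V : nat -> set 'rV[R]_n) (Cstar r0 : R) :
  bounded_set B ->
  (forall k, finite_set (V k)) ->
  (forall k, V k !=set0) ->
  (forall k, V k `<=` B) ->
  0 < Cstar -> 0 < r0 ->
  (forall k : nat, (0 < k)%N -> forall vk, V k vk ->
     exists vk1, V k.-1 vk1 /\ eucl_dist vk1 vk < Cstar * (2 ^- k) * r0) ->
  exists W : set 'rV[R]_n,
    compact W /\ W `<=` closure B /\
    (fun k => hausdorff_dist (V k) W) @ \oo --> 0%E.
Proof.
move=> bB _ V_ne VB Cstar_gt0 r0_gt0 V_pred.
have c_ge0 : 0 <= Cstar * r0 by rewrite mulr_ge0 // ltW.
have V_pred_mx k x : V k.+1 x -> exists2 y, V k y & `|y - x| <= Cstar * r0 * 2^-k.+1.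
  move=> /(V_pred k.+1 isT) [y [Vky yx]]; exists y => //.
  by apply: le_trans (mx_norm_le_eucl_dist y x) _; rewrite ltW // mulrAC.
have cB : compact (closure B).
  by apply: bounded_closed_compact; [exact: bounded_closure | exact: closed_closure].
have VcB j : V j `<=` closure B by move=> x /VB; exact: subset_closure.
have limB : upper_limit V `<=` closure B := upper_limit_sub_closure VB.
exists (upper_limit V); split.
  by apply: subclosed_compact cB limB; exact: closed_upper_limit.
split=> //; apply: hausdorff_dist_cvg0 => // e e0.
apply: filterS2 (eventually_within_upper_limit cB VcB e0)
  (upper_limit_eventually_within c_ge0 V_pred_mx e0) => k.
by split.
Qed.
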